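(* Let $Q,P,t,V_1,V_2,\gamma$ and the points $X_q,X_p$ be as in the context. Then $$Q(X_p)P(X_p)+\int_{X_p}^{X_q}P\,dQ \;=\; Q(X_q)P(X_q)+\int_{X_q}^{X_p}Q\,dP \;=\; \big(PQ-V_1(Q)-V_2(P)\big)_0+2t\ln\gamma .$$ This common value is denoted $\mu$.
   Context: Fix integers $d_1,d_2\ge 1$. For complex parameters $\gamma\neq 0$, $\alpha_0,\dots,\alpha_{d_2}$, $\beta_0,\dots,\beta_{d_1}$ put $Q(\lambda)=\gamma\lambda+\sum_{j=0}^{d_2}\alpha_j\lambda^{-j}$ and $P(\lambda)=\frac{\gamma}{\lambda}+\sum_{j=0}^{d_1}\beta_j\lambda^j$, meromorphic functions on the Riemann sphere of $\lambda$. Write $\infty_Q$ for $\lambda=\infty$ and $\infty_P$ for $\lambda=0$. All residues $\mathrm{res}_p\,\omega$ are ordinary residues of meromorphic differentials at the point $p$ (so $\mathrm{res}_{\lambda=\infty}\frac{d\lambda}{\lambda}=-1$). Define $t=\mathrm{res}_{\infty_Q}P\,dQ$ $(=\mathrm{res}_{\infty_P}Q\,dP)$, $u_K=-\mathrm{res}_{\infty_Q}PQ^{-K}dQ$ for $1\le K\le d_1+1$, $v_J=-\mathrm{res}_{\infty_P}QP^{-J}dP$ for $1\le J\le d_2+1$, and $V_1(x)=\sum_{K=1}^{d_1+1}\frac{u_K}{K}x^K$, $V_2(y)=\sum_{J=1}^{d_2+1}\frac{v_J}{J}y^J$; thus $P=V_1'(Q)-\frac tQ+O(Q^{-2})$ near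 $\infty_Q$ and $Q=V_2'(P)-\frac tP+O(P^{-2})$ near $\infty_P$. For a Laurent polynomial $f(\lambda)$, $(f)_0$ denotes its coefficient of $\lambda^0$. The points $X_q,X_p\in\mathbb C^*$ (values of $\lambda$) are defined implicitly by requiring $-V_1(Q(\lambda))+t\ln Q(\lambda)+\int_{X_q}^{\lambda}P\,dQ=O(\lambda^{-1})$ as $\lambda\to\infty$ and $-V_2(P(\lambda))+t\ln P(\lambda)+\int_{X_p}^{\lambda}Q\,dP=O(\lambda)$ as $\lambda\to 0$, for fixed compatible choices of integration paths in $\mathbb C^*$ and of branches of the logarithms (used consistently throughout). *)

From Stdlib Require Import Reals.
From Coquelicot Require Import Coquelicot.

Local Open Scope C_scope.

(** Points of C^* are represented through a logarithmic
    lift: the point λ = cexp ℓ.  Working on the universal cover (ℓ-plane)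
    makes the "fixed compatible choices of integration paths and log branches"
    explicit: a lift of a path in C^* from cexp a to cexp b is a path from a
    to b in the ℓ-plane, and ln λ along the path is ℓ itself. *)
Definition cexp (z : C) : C :=
  (exp (Re z) * cos (Im z), exp (Re z) * sin (Im z))%R.

(** Line integral of the differential f(λ) dλ along the lift of a path in C^*
    from cexp a to cexp b, the lifted path being the segment [a,b] in the
    ℓ-plane (on the simply connected cover the result does not depend on the
    lifted path):  ∫_0^1 f(λ(s)) λ'(s) ds with λ(s) = cexp (a + s (b - a)). *)
Definition lint (f : C -> C) (a b : C) : C :=
  RInt (V := C_R_CompleteNormedModule)
    (fun s : R => let z := a + RtoC s * (b - a) in f (cexp z) * cexp z * (b - a))
    0%R 1%R.

Definition two_pi_i : C := RtoC (2 * PI) * Ci.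

(** Ordinary residue at λ = ∞ of f(λ) dλ: -(1/2πi) ∮_{|λ|=R} f dλ (positive
    orientation) for every sufficiently large R.  (The circle |λ| = R is the
    lift ℓ from ln R to ln R + 2πi.) *)
Definition is_res_inf (f : C -> C) (r : C) : Prop :=
  exists R0 : R, forall Rr : R, (R0 < Rr)%R ->
    lint f (RtoC (ln Rr)) (RtoC (ln Rr) + two_pi_i) = - two_pi_i * r.

Definition is_res_0 (f : C -> C) (res : C) : Prop :=
  exists r0 : R, (0 < r0)%R /\ forall r : R, (0 < r < r0)%R ->
    lint f (RtoC (ln r)) (RtoC (ln r) + two_pi_i) = two_pi_i * res.

Definition is_coef0 (f : C -> C) (c : C) : Prop :=
  exists (N : nat) (a : nat -> C),
    (forall l : C, l <> 0 -> f l = sum_n (fun k => a k * l ^ k) (2 * N) / l ^ N)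
    /\ a N = c.

Definition Qf (d2 : nat) (g : C) (al : nat -> C) (l : C) : C :=
  g * l + sum_n (fun j => al j * (/ l) ^ j) d2.
Definition dQf (d2 : nat) (g : C) (al : nat -> C) (l : C) : C :=
  g - sum_n (fun j => INR j * al j * (/ l) ^ (S j)) d2.

Definition Pf (d1 : nat) (g : C) (be : nat -> C) (l : C) : C :=
  g / l + sum_n (fun j => be j * l ^ j) d1.
Definition dPf (d1 : nat) (g : C) (be : nat -> C) (l : C) : C :=
  - g / (l ^ 2) + sum_n (fun j => INR j * be j * l ^ j / l) d1.

Definition Vpot (d : nat) (u : nat -> C) (x : C) : C :=
  sum_n (fun k => u (S k) / INR (S k) * x ^ (S k)) d.

(* In the coordinate l = ln λ, the functions P, Q, λ Q'(λ), λ P'(λ), V1(Q), V2(P) and PQ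
   are exponential polynomials Σ c_k e^(k l).  Such a function has the explicit primitive
   Σ_{k≠0} c_k/k e^(k l) + c_0 l, and its integral over a vertical period [x, x + 2πi] is
   2πi c_0.  The normalisation of X_q therefore says that an exponential polynomial plus an
   affine function of l tends to 0 along far vertical lines; comparing the two ends of a
   period kills the linear part and averaging over the period yields, F_ω denoting the
   primitive above, F_{P dQ}(X_q) = t ln γ - (V1(Q))_0; likewise
   F_{Q dP}(X_p) = t ln γ - (V2(P))_0.
   Integration by parts, F_{P dQ} + F_{Q dP} = PQ - (PQ)_0, then gives both expressions for μ. *)

From Stdlib Require Import Reals Lra Lia ZArith List.
From Coquelicot Require Import Coquelicot.

Local Open Scope C_scope.

Lemma cexp_add (a b : C) : cexp (a + b) = cexp a * cexp b.
Proof.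
  destruct a as [a1 a2], b as [b1 b2]; unfold cexp; simpl.
  apply injective_projections; simpl; rewrite exp_plus, ?cos_plus, ?sin_plus; ring.
Qed.

Lemma cexp_0 : cexp 0 = 1.
Proof.
  unfold cexp; simpl; rewrite exp_0, cos_0, sin_0.
  apply injective_projections; simpl; ring.
Qed.

Lemma cexp_neq0 (a : C) : cexp a <> 0.
Proof.
  intros Ha.
  assert (H := cexp_add a (- a)).
  replace (a + - a) with (RtoC 0) in H by ring.
  rewrite cexp_0, Ha, Cmult_0_l in H.
  apply C1_nz; exact H.
Qed.

Lemma cexp_R_Ci (r : R) : cexp (RtoC r * Ci) = (cos r, sin r).
Proof.
  unfold cexp, Ci; simpl.
  replace (r * 0 - 0 * 1)%R with 0%R by ring.
  replace (r * 1 + 0 * 0)%R with r by ring.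
  rewrite exp_0, !Rmult_1_l; reflexivity.
Qed.

Lemma Cmod_two_pi_i : Cmod two_pi_i = (2 * PI)%R.
Proof.
  unfold two_pi_i; rewrite Cmod_mult, Cmod_R.
  replace (Cmod Ci) with 1%R.
  - rewrite Rmult_1_r; apply Rabs_right; pose proof PI_RGT_0; lra.
  - unfold Cmod, Ci; simpl.
    replace (0 * (0 * 1) + 1 * (1 * 1))%R with 1%R by ring; symmetry; apply sqrt_1.
Qed.

Lemma two_pi_i_neq0 : two_pi_i <> 0.
Proof.
  intros H; apply (f_equal Cmod) in H.
  rewrite Cmod_two_pi_i, Cmod_0 in H; pose proof PI_RGT_0; lra.
Qed.

Lemma RtoC_IZR_neq0 (k : Z) : k <> 0%Z -> RtoC (IZR k) <> 0.
Proof. intros Hk H; apply RtoC_inj in H; apply Hk, eq_IZR; exact H. Qed.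

Definition cexpZ (k : Z) (l : C) : C := cexp (RtoC (IZR k) * l).

Lemma cexpZ_add (i j : Z) (l : C) : cexpZ (i + j) l = cexpZ i l * cexpZ j l.
Proof. unfold cexpZ; rewrite <- cexp_add, plus_IZR, RtoC_plus; f_equal; ring. Qed.

Lemma cexpZ_0 (l : C) : cexpZ 0 l = 1.
Proof. unfold cexpZ; rewrite Cmult_0_l; apply cexp_0. Qed.

Lemma cexpZ_1 (l : C) : cexpZ 1 l = cexp l.
Proof. unfold cexpZ; rewrite Cmult_1_l; reflexivity. Qed.

Lemma cexpZ_neq0 (k : Z) (l : C) : cexpZ k l <> 0.
Proof. apply cexp_neq0. Qed.

Lemma cexpZ_nat (n : nat) (l : C) : cexpZ (Z.of_nat n) l = cexp l ^ n.
Proof.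
  induction n as [|n IH]; simpl Cpow.
  - apply cexpZ_0.
  - rewrite Nat2Z.inj_succ, <- Z.add_1_l, cexpZ_add, cexpZ_1, IH; reflexivity.
Qed.

Lemma cexpZ_opp (k : Z) (l : C) : cexpZ (- k) l = / cexpZ k l.
Proof.
  assert (H := cexpZ_add k (- k) l).
  rewrite Z.add_opp_diag_r, cexpZ_0 in H.
  replace (cexpZ (- k) l) with (/ cexpZ k l * (cexpZ k l * cexpZ (- k) l))
    by (field; apply cexpZ_neq0).
  rewrite <- H; ring.
Qed.

Lemma cexpZ_opp_nat (n : nat) (l : C) : cexpZ (- Z.of_nat n) l = (/ cexp l) ^ n.
Proof. rewrite cexpZ_opp, cexpZ_nat, Cpow_inv; [reflexivity|apply cexp_neq0]. Qed.

Lemma cexpZ_period (k : Z) (l : C) : cexpZ k (l + two_pi_i) = cexpZ k l.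
Proof.
  unfold cexpZ, two_pi_i.
  replace (RtoC (IZR k) * (l + RtoC (2 * PI) * Ci))
    with (RtoC (IZR k) * l + RtoC (2 * (IZR k * PI)) * Ci) by (rewrite !RtoC_mult; ring).
  rewrite cexp_add, cexp_R_Ci, cos_2a_sin, sin_2a, sin_eq_0_1 by (exists k; reflexivity).
  replace ((1 - 2 * 0 * 0)%R, (2 * 0 * cos (IZR k * PI))%R) with (RtoC 1)
    by (apply injective_projections; simpl; ring).
  ring.
Qed.

Definition sum_list {A : Type} (f : A -> C) (s : list A) : C :=
  fold_right (fun x acc => f x + acc) 0 s.

Lemma sum_list_cons {A : Type} (f : A -> C) (x : A) (s : list A) :
  sum_list f (x :: s) = f x + sum_list f s.
Proof. reflexivity. Qed.

Lemma sum_list_app {A : Type} (f : A -> C) (s1 s2 : list A) :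
  sum_list f (s1 ++ s2) = sum_list f s1 + sum_list f s2.
Proof. induction s1 as [|x s1 IH]; simpl; [ring|rewrite IH; ring]. Qed.

Lemma sum_list_ext {A : Type} (f g : A -> C) (s : list A) :
  (forall x, In x s -> f x = g x) -> sum_list f s = sum_list g s.
Proof.
  induction s as [|x s IH]; intros H; simpl; [reflexivity|].
  rewrite H, IH; [reflexivity| |left]; auto using in_cons.
Qed.

Lemma sum_list_zero {A : Type} (f : A -> C) (s : list A) :
  (forall x, In x s -> f x = 0) -> sum_list f s = 0.
Proof.
  intros H; transitivity (sum_list (fun _ => 0) s); [now apply sum_list_ext|].
  clear H; induction s as [|x s IH]; simpl; [|rewrite IH]; ring.
Qed.

Lemma sum_list_plus {A : Type} (f g : A -> C) (s : list A) :
  sum_list (fun x => f x + g x) s = sum_list f s + sum_list g s.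
Proof. induction s as [|x s IH]; simpl; [|rewrite IH]; ring. Qed.

Lemma sum_list_minus {A : Type} (f g : A -> C) (s : list A) :
  sum_list (fun x => f x - g x) s = sum_list f s - sum_list g s.
Proof. induction s as [|x s IH]; simpl; [|rewrite IH]; ring. Qed.

Lemma sum_list_mult_l {A : Type} (c : C) (f : A -> C) (s : list A) :
  sum_list (fun x => c * f x) s = c * sum_list f s.
Proof. induction s as [|x s IH]; simpl; [|rewrite IH]; ring. Qed.

Lemma sum_list_map {A B : Type} (f : B -> C) (h : A -> B) (s : list A) :
  sum_list f (map h s) = sum_list (fun x => f (h x)) s.
Proof. induction s as [|x s IH]; simpl; [|rewrite IH]; reflexivity. Qed.

Lemma sum_list_flat_map {A B : Type} (f : B -> C) (h : A -> list B) (s : list A) :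
  sum_list f (flat_map h s) = sum_list (fun x => sum_list f (h x)) s.
Proof. induction s as [|x s IH]; simpl; [|rewrite sum_list_app, IH]; reflexivity. Qed.

Lemma sum_list_swap {A B : Type} (F : A -> B -> C) (s : list A) (r : list B) :
  sum_list (fun x => sum_list (F x) r) s = sum_list (fun y => sum_list (fun x => F x y) s) r.
Proof.
  revert r; induction s as [|x s IH]; intros r; simpl.
  - symmetry; apply sum_list_zero; reflexivity.
  - rewrite IH, <- sum_list_plus; reflexivity.
Qed.

Lemma sum_list_seq (f : nat -> C) (n : nat) : sum_list f (seq 0 (S n)) = sum_n f n.
Proof.
  induction n as [|n IH].
  - rewrite sum_O; simpl; ring.
  - rewrite seq_S, sum_list_app, IH, sum_Sn; simpl; rewrite Cplus_0_r; reflexivity.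
Qed.

Lemma sum_n_Cmult_r (f : nat -> C) (c : C) (n : nat) :
  sum_n f n * c = sum_n (fun j => f j * c) n.
Proof. symmetry; exact (sum_n_mult_r (K := C_Ring) c f n). Qed.

Lemma sum_n_C_ext (f g : nat -> C) (n : nat) :
  (forall j, f j = g j) -> sum_n f n = sum_n g n.
Proof. apply sum_n_ext. Qed.

(* [(c, k)] stands for the monomial c e^(k l), that is c λ^k at λ = cexp l. *)
Definition expoly := list (C * Z).

Definition mono_eval (m : C * Z) (l : C) : C := fst m * cexpZ (snd m) l.
Definition mono_mul (m n : C * Z) : C * Z := (fst m * fst n, (snd m + snd n)%Z).
Definition mono_deriv (m : C * Z) : C * Z := (fst m * IZR (snd m), snd m).
Definition mono_coef0 (m : C * Z) : C := if (snd m =? 0)%Z then fst m else 0.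
Definition mono_prim (m : C * Z) (l : C) : C :=
  if (snd m =? 0)%Z then fst m * l else fst m / IZR (snd m) * cexpZ (snd m) l.
Definition mono_prim_periodic (m : C * Z) : C * Z :=
  (if (snd m =? 0)%Z then RtoC 0 else fst m / IZR (snd m), snd m).

Definition ep_eval (s : expoly) (l : C) : C := sum_list (fun m => mono_eval m l) s.
Definition ep_mul (s1 s2 : expoly) : expoly := flat_map (fun m => map (mono_mul m) s2) s1.
Definition ep_scale (c : C) (s : expoly) : expoly := map (fun m => (c * fst m, snd m)) s.
Definition ep_deriv (s : expoly) : expoly := map mono_deriv s.
Definition ep_coef0 (s : expoly) : C := sum_list mono_coef0 s.
Definition ep_prim (s : expoly) (l : C) : C := sum_list (fun m => mono_prim m l) s.
Definition ep_prim_periodic (s : expoly) : expoly := map mono_prim_periodic s.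

Fixpoint ep_pow (s : expoly) (n : nat) : expoly :=
  match n with
  | O => (RtoC 1, 0%Z) :: nil
  | S n => ep_mul s (ep_pow s n)
  end.

Lemma ep_eval_cons (m : C * Z) (s : expoly) (l : C) :
  ep_eval (m :: s) l = mono_eval m l + ep_eval s l.
Proof. reflexivity. Qed.

Lemma ep_eval_app (s1 s2 : expoly) (l : C) :
  ep_eval (s1 ++ s2) l = ep_eval s1 l + ep_eval s2 l.
Proof. apply sum_list_app. Qed.

Lemma ep_eval_flat_map {A : Type} (F : A -> expoly) (r : list A) (l : C) :
  ep_eval (flat_map F r) l = sum_list (fun x => ep_eval (F x) l) r.
Proof. apply sum_list_flat_map. Qed.

Lemma ep_coef0_app (s1 s2 : expoly) : ep_coef0 (s1 ++ s2) = ep_coef0 s1 + ep_coef0 s2.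
Proof. apply sum_list_app. Qed.

Lemma sum_list_ep_mul (F : C * Z -> C) (s1 s2 : expoly) :
  sum_list F (ep_mul s1 s2) = sum_list (fun m => sum_list (fun n => F (mono_mul m n)) s2) s1.
Proof.
  unfold ep_mul; rewrite sum_list_flat_map.
  apply sum_list_ext; intros m _; apply sum_list_map.
Qed.

Lemma ep_eval_mul (s1 s2 : expoly) (l : C) :
  ep_eval (ep_mul s1 s2) l = ep_eval s1 l * ep_eval s2 l.
Proof.
  unfold ep_eval; rewrite sum_list_ep_mul, Cmult_comm, <- sum_list_mult_l.
  apply sum_list_ext; intros m _.
  rewrite Cmult_comm, <- sum_list_mult_l.
  apply sum_list_ext; intros n _.
  unfold mono_eval, mono_mul; simpl; rewrite cexpZ_add; ring.
Qed.

Lemma ep_eval_scale (c : C) (s : expoly) (l : C) : ep_eval (ep_scale c s) l = c * ep_eval s l.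
Proof.
  unfold ep_eval, ep_scale; rewrite sum_list_map, <- sum_list_mult_l.
  apply sum_list_ext; intros m _; unfold mono_eval; simpl; ring.
Qed.

Lemma ep_coef0_scale (c : C) (s : expoly) : ep_coef0 (ep_scale c s) = c * ep_coef0 s.
Proof.
  unfold ep_coef0, ep_scale; rewrite sum_list_map, <- sum_list_mult_l.
  apply sum_list_ext; intros m _; unfold mono_coef0; simpl.
  destruct (snd m =? 0)%Z; ring.
Qed.

Lemma ep_eval_pow (s : expoly) (n : nat) (l : C) : ep_eval (ep_pow s n) l = ep_eval s l ^ n.
Proof.
  induction n as [|n IH]; simpl.
  - unfold ep_eval, mono_eval; simpl; rewrite cexpZ_0; ring.
  - rewrite ep_eval_mul, IH; reflexivity.
Qed.

Lemma ep_eval_period (s : expoly) (l : C) : ep_eval s (l + two_pi_i) = ep_eval s l.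
Proof.
  apply sum_list_ext; intros m _; unfold mono_eval; rewrite cexpZ_period; reflexivity.
Qed.

Lemma ep_prim_split (s : expoly) (l : C) :
  ep_prim s l = ep_eval (ep_prim_periodic s) l + ep_coef0 s * l.
Proof.
  unfold ep_prim, ep_eval, ep_prim_periodic, ep_coef0.
  rewrite sum_list_map, Cmult_comm, <- sum_list_mult_l, <- sum_list_plus.
  apply sum_list_ext; intros m _; unfold mono_prim, mono_eval, mono_coef0; simpl.
  destruct (snd m =? 0)%Z; ring.
Qed.

Lemma ep_coef0_prim_periodic (s : expoly) : ep_coef0 (ep_prim_periodic s) = 0.
Proof.
  unfold ep_coef0, ep_prim_periodic; rewrite sum_list_map.
  apply sum_list_zero; intros m _; unfold mono_coef0; simpl.
  destruct (snd m =? 0)%Z; reflexivity.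
Qed.

Lemma ep_eval_deriv_prim_periodic (s : expoly) (l : C) :
  ep_eval (ep_deriv (ep_prim_periodic s)) l = ep_eval s l - ep_coef0 s.
Proof.
  unfold ep_eval, ep_deriv, ep_prim_periodic, ep_coef0.
  rewrite map_map, sum_list_map.
  rewrite <- sum_list_minus; apply sum_list_ext; intros [c k] _.
  unfold mono_eval, mono_deriv, mono_prim_periodic, mono_coef0; simpl.
  destruct (Z.eqb_spec k 0) as [->|Hk].
  - rewrite cexpZ_0; ring.
  - field; apply RtoC_IZR_neq0, Hk.
Qed.

Lemma ep_prim_period (s : expoly) (l : C) :
  ep_prim s (l + two_pi_i) = ep_prim s l + ep_coef0 s * two_pi_i.
Proof. rewrite !ep_prim_split, ep_eval_period; ring. Qed.

(* If the exponents add up to 0, the two primitives are linear in [l] with opposite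
   slopes, while the product is its own constant term. *)
Lemma mono_prim_mul_deriv (m n : C * Z) (l : C) :
  mono_prim (mono_mul m (mono_deriv n)) l + mono_prim (mono_mul n (mono_deriv m)) l
  = mono_eval (mono_mul m n) l - mono_coef0 (mono_mul m n).
Proof.
  destruct m as [a i], n as [b j].
  unfold mono_prim, mono_mul, mono_deriv, mono_eval, mono_coef0; simpl.
  rewrite (Z.add_comm j i).
  destruct (Z.eqb_spec (i + j) 0) as [E|E].
  - assert (Hj : IZR j = (- IZR i)%R) by (rewrite <- opp_IZR; f_equal; lia).
    rewrite E, cexpZ_0, Hj, RtoC_opp; ring.
  - assert (Hij := RtoC_IZR_neq0 _ E).
    rewrite plus_IZR, RtoC_plus in *; field; exact Hij.
Qed.

Lemma ep_prim_mul_deriv (s1 s2 : expoly) (l : C) :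
  ep_eval s1 l * ep_eval s2 l
  = ep_prim (ep_mul s1 (ep_deriv s2)) l + ep_prim (ep_mul s2 (ep_deriv s1)) l
    + ep_coef0 (ep_mul s1 s2).
Proof.
  rewrite <- ep_eval_mul.
  unfold ep_prim, ep_eval, ep_coef0, ep_deriv; rewrite !sum_list_ep_mul.
  rewrite (sum_list_swap (fun n m => mono_prim (mono_mul n m) l) s2), sum_list_map.
  rewrite <- !sum_list_plus; apply sum_list_ext; intros m _.
  rewrite sum_list_map, <- !sum_list_plus; apply sum_list_ext; intros n _.
  rewrite mono_prim_mul_deriv; ring.
Qed.

Lemma is_derive_C_components (f : R -> C) (x : R) (f' : C) :
  is_derive (fun u => fst (f u)) x (fst f') ->
  is_derive (fun u => snd (f u)) x (snd f') ->
  is_derive (V := C_R_NormedModule) f x f'.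
Proof.
  intros H1 H2.
  apply is_derive_ext with (fun u => (fst (f u), snd (f u))); [intros u; now destruct (f u)|].
  destruct f' as [f1 f2]; unfold is_derive in *.
  apply (filterdiff_comp'_2 (U := R_NormedModule) (V := R_NormedModule) (W := C_R_NormedModule)
    _ _ (fun a b => (a, b)) x _ _ (fun a b => (a, b)) H1 H2).
  apply filterdiff_linear.
  apply (is_linear_prod (T := prod_NormedModule R_AbsRing R_NormedModule R_NormedModule)
    (U := R_NormedModule) (V := R_NormedModule)); [apply is_linear_fst|apply is_linear_snd].
Qed.

Lemma is_derive_Cplus (f g : R -> C) (x : R) (f' g' : C) :
  is_derive (V := C_R_NormedModule) f x f' -> is_derive (V := C_R_NormedModule) g x g' ->
  is_derive (V := C_R_NormedModule) (fun u => f u + g u) x (f' + g').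
Proof. apply (is_derive_plus (V := C_R_NormedModule)). Qed.

Lemma is_derive_affine (c w0 w1 : C) (x : R) :
  is_derive (V := C_R_NormedModule) (fun u : R => c * (w0 + RtoC u * w1)) x (c * w1).
Proof.
  destruct c as [c1 c2], w0 as [a b], w1 as [p q].
  apply is_derive_C_components; simpl; auto_derive; auto; ring.
Qed.

Lemma is_derive_cexp_affine (c w0 w1 : C) (x : R) :
  is_derive (V := C_R_NormedModule) (fun u : R => c * cexp (w0 + RtoC u * w1)) x
    (c * w1 * cexp (w0 + RtoC x * w1)).
Proof.
  destruct c as [c1 c2], w0 as [a b], w1 as [p q].
  apply is_derive_C_components; unfold cexp; simpl; auto_derive; auto; unfold Rminus; ring.
Qed.

Lemma is_derive_ep_eval (s : expoly) (a w : C) (x : R) :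
  is_derive (V := C_R_NormedModule) (fun u : R => ep_eval s (a + RtoC u * w)) x
    (ep_eval (ep_deriv s) (a + RtoC x * w) * w).
Proof.
  induction s as [|[c k] s IH].
  - rewrite Cmult_0_l; exact (is_derive_const (V := C_R_NormedModule) _ _).
  - apply is_derive_ext with
      (fun u : R => c * cexp (IZR k * a + RtoC u * (IZR k * w)) + ep_eval s (a + RtoC u * w)).
    { intros u; rewrite ep_eval_cons; unfold mono_eval, cexpZ; simpl.
      do 3 f_equal; ring. }
    replace (ep_eval (ep_deriv ((c, k) :: s)) (a + RtoC x * w) * w) with
      (c * (IZR k * w) * cexp (IZR k * a + RtoC x * (IZR k * w))
       + ep_eval (ep_deriv s) (a + RtoC x * w) * w).
    + apply is_derive_Cplus; [apply is_derive_cexp_affine|exact IH].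
    + change (ep_deriv ((c, k) :: s)) with (mono_deriv (c, k) :: ep_deriv s).
      rewrite ep_eval_cons; unfold mono_eval, mono_deriv, cexpZ; simpl.
      replace (IZR k * a + RtoC x * (IZR k * w)) with (RtoC (IZR k) * (a + RtoC x * w)) by ring.
      ring.
Qed.

Lemma continuous_ep_eval_affine (s : expoly) (a w : C) (x : R) :
  continuous (fun u : R => ep_eval s (a + RtoC u * w) * w) x.
Proof.
  apply continuous_ext with (fun u : R => ep_eval (ep_scale w s) (a + RtoC u * w)).
  { intros u; rewrite ep_eval_scale; apply Cmult_comm. }
  apply (ex_derive_continuous (K := R_AbsRing) (V := C_R_NormedModule)).
  eexists; apply is_derive_ep_eval.
Qed.

Lemma is_derive_ep_prim (s : expoly) (a w : C) (x : R) :
  is_derive (V := C_R_NormedModule) (fun u : R => ep_prim s (a + RtoC u * w)) x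
    (ep_eval s (a + RtoC x * w) * w).
Proof.
  apply is_derive_ext with
    (fun u : R => ep_eval (ep_prim_periodic s) (a + RtoC u * w) + ep_coef0 s * (a + RtoC u * w)).
  { intros u; symmetry; apply ep_prim_split. }
  replace (ep_eval s (a + RtoC x * w) * w) with
    (ep_eval (ep_deriv (ep_prim_periodic s)) (a + RtoC x * w) * w + ep_coef0 s * w)
    by (rewrite ep_eval_deriv_prim_periodic; ring).
  apply is_derive_Cplus; [apply is_derive_ep_eval|apply is_derive_affine].
Qed.

Lemma is_RInt_ep_eval_affine (s : expoly) (a b : C) :
  is_RInt (V := C_R_CompleteNormedModule)
    (fun u : R => ep_eval s (a + RtoC u * (b - a)) * (b - a)) 0 1
    (ep_prim s b - ep_prim s a).
Proof.
  assert (H := is_RInt_derive (V := C_R_CompleteNormedModule)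
    (fun u : R => ep_prim s (a + RtoC u * (b - a)))
    (fun u : R => ep_eval s (a + RtoC u * (b - a)) * (b - a)) 0 1
    (fun x _ => is_derive_ep_prim s a (b - a) x)
    (fun x _ => continuous_ep_eval_affine s a (b - a) x)).
  cbv beta in H.
  replace (a + RtoC 1 * (b - a)) with b in H by ring.
  replace (a + RtoC 0 * (b - a)) with a in H by ring.
  exact H.
Qed.

Lemma lint_expoly (f : C -> C) (s : expoly) (a b : C) :
  (forall z, f (cexp z) * cexp z = ep_eval s z) ->
  lint f a b = ep_prim s b - ep_prim s a.
Proof.
  intros Hf; unfold lint; apply (is_RInt_unique (V := C_R_CompleteNormedModule)).
  eapply is_RInt_ext; [|apply is_RInt_ep_eval_affine].
  intros u _; cbv zeta; rewrite Hf; reflexivity.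
Qed.

Lemma is_RInt_ep_eval_period (s : expoly) (x : C) :
  is_RInt (V := C_R_CompleteNormedModule)
    (fun u : R => ep_eval s (x + RtoC u * two_pi_i) * two_pi_i) 0 1 (ep_coef0 s * two_pi_i).
Proof.
  replace (ep_coef0 s * two_pi_i) with (ep_prim s (x + two_pi_i) - ep_prim s x)
    by (rewrite ep_prim_period; ring).
  eapply is_RInt_ext; [|apply is_RInt_ep_eval_affine].
  intros u _; replace (x + two_pi_i - x) with two_pi_i by ring; reflexivity.
Qed.

Lemma ep_coef0_ext (s1 s2 : expoly) :
  (forall l, ep_eval s1 l = ep_eval s2 l) -> ep_coef0 s1 = ep_coef0 s2.
Proof.
  intros H.
  assert (E : ep_coef0 s1 * two_pi_i = ep_coef0 s2 * two_pi_i).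
  { rewrite <- (is_RInt_unique _ _ _ _ (is_RInt_ep_eval_period s1 0)),
      <- (is_RInt_unique _ _ _ _ (is_RInt_ep_eval_period s2 0)).
    apply (RInt_ext (V := C_R_CompleteNormedModule)); intros u _; rewrite H; reflexivity. }
  replace (ep_coef0 s1) with (ep_coef0 s1 * two_pi_i / two_pi_i)
    by (field; exact two_pi_i_neq0).
  rewrite E; field; exact two_pi_i_neq0.
Qed.

Definition small_on_period_lines (F : C -> C) : Prop :=
  forall d, (0 < d)%R ->
    exists x : R, forall u : R, (Cmod (F (RtoC x + RtoC u * two_pi_i)%C) <= d)%R.

Lemma Cmod_eq0_of_le_all (a : C) : (forall d, (0 < d)%R -> (Cmod a <= d)%R) -> a = 0.
Proof.
  intros H; apply Cmod_eq_0.
  destruct (Rle_lt_dec (Cmod a) 0) as [Ha|Ha]; [pose proof (Cmod_ge_0 a); lra|].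
  specialize (H (Cmod a / 2)%R); lra.
Qed.

(* Periodicity of the exponential part isolates [a]; averaging over a period then
   isolates the constant term. *)
Lemma ep_affine_small_on_period_lines (s : expoly) (a b : C) :
  small_on_period_lines (fun l => ep_eval s l + a * l + b) -> a = 0 /\ ep_coef0 s + b = 0.
Proof.
  intros H; pose proof PI_RGT_0 as Hpi.
  assert (Ha : a = 0).
  { apply Cmod_eq0_of_le_all; intros d Hd.
    destruct (H (d * PI)%R) as [x Hx]; [apply Rmult_lt_0_compat; lra|].
    assert (E : a * two_pi_i
      = (ep_eval s (RtoC x + RtoC 1 * two_pi_i) + a * (RtoC x + RtoC 1 * two_pi_i) + b)
        - (ep_eval s (RtoC x + RtoC 0 * two_pi_i) + a * (RtoC x + RtoC 0 * two_pi_i) + b)).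
    { replace (RtoC x + RtoC 1 * two_pi_i) with ((RtoC x + RtoC 0 * two_pi_i) + two_pi_i) by ring.
      rewrite ep_eval_period; ring. }
    assert (Hmod : (Cmod (a * two_pi_i) <= 2 * (d * PI))%R).
    { rewrite E; unfold Cminus; eapply Rle_trans; [apply Cmod_triangle|].
      rewrite Cmod_opp; specialize (Hx 1%R) as H1; specialize (Hx 0%R) as H0; lra. }
    rewrite Cmod_mult, Cmod_two_pi_i in Hmod; nra. }
  split; [exact Ha|]; subst a.
  apply Cmod_eq0_of_le_all; intros d Hd.
  destruct (H d Hd) as [x Hx].
  assert (Hb0 : forall l, ep_eval ((b, 0%Z) :: s) l = ep_eval s l + b).
  { intros l; rewrite ep_eval_cons; unfold mono_eval; simpl; rewrite cexpZ_0; ring. }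
  assert (I := is_RInt_ep_eval_period ((b, 0%Z) :: s) x).
  apply (norm_RInt_le_const _ 0 1 _ (d * (2 * PI))%R Rle_0_1) in I.
  - rewrite <- Cmod_norm, Cmod_mult, Cmod_two_pi_i in I.
    replace (ep_coef0 ((b, 0%Z) :: s)) with (ep_coef0 s + b) in I
      by (unfold ep_coef0, mono_coef0; simpl; ring).
    nra.
  - intros u _; rewrite <- Cmod_norm, Cmod_mult, Cmod_two_pi_i, Hb0.
    apply Rmult_le_compat_r; [lra|].
    specialize (Hx u); rewrite Cmult_0_l, Cplus_0_r in Hx; exact Hx.
Qed.

(* [sg = 1] is the end λ → ∞ (Re l → +∞), [sg = -1] the end λ → 0 (Re l → -∞). *)
Definition vanishes_far (sg : R) (F : C -> C) : Prop :=
  forall eps, (0 < eps)%R ->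
    exists R1 : R, forall l, (R1 <= sg * Re l)%R -> (Cmod (F l) <= eps)%R.

Lemma vanishes_far_exp_bound (sg K0 R0 : R) (F : C -> C) :
  (forall l, (R0 <= sg * Re l)%R -> (Cmod (F l) <= K0 * exp (- (sg * Re l)))%R) ->
  vanishes_far sg F.
Proof.
  intros HF eps Heps.
  set (K := (Rabs K0 + 1)%R).
  assert (HK : (0 < K)%R) by (unfold K; pose proof (Rabs_pos K0); lra).
  exists (Rmax R0 (ln (K / eps))); intros l Hl.
  assert (Hexp : (exp (- (sg * Re l)) <= eps / K)%R).
  { replace (eps / K)%R with (exp (- ln (K / eps)))
      by (rewrite exp_Ropp, exp_ln by (apply Rdiv_lt_0_compat; lra); field; lra).
    assert (Hle : (- (sg * Re l) <= - ln (K / eps))%R)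
      by (pose proof (Rmax_r R0 (ln (K / eps))); lra).
    destruct (Rle_lt_or_eq_dec _ _ Hle) as [Hlt|Heq].
    - left; apply exp_increasing, Hlt.
    - rewrite Heq; right; reflexivity. }
  eapply Rle_trans; [apply HF; pose proof (Rmax_l R0 (ln (K / eps))); lra|].
  pose proof (exp_pos (- (sg * Re l))); pose proof (Rle_abs K0).
  apply Rle_trans with (K * exp (- (sg * Re l)))%R; [apply Rmult_le_compat_r; unfold K; lra|].
  apply Rle_trans with (K * (eps / K))%R; [apply Rmult_le_compat_l; lra|].
  right; field; lra.
Qed.

Lemma vanishes_far_minus_scal (sg : R) (F G : C -> C) (t : C) :
  vanishes_far sg F -> vanishes_far sg G -> vanishes_far sg (fun l => F l - t * G l).
Proof.
  intros HF HG eps Heps.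
  pose proof (Cmod_ge_0 t) as Ht.
  destruct (HF (eps / 2)%R) as [R1 H1]; [lra|].
  destruct (HG (eps / (2 * (Cmod t + 1)))%R) as [R2 H2]; [apply Rdiv_lt_0_compat; lra|].
  exists (Rmax R1 R2); intros l Hl.
  specialize (H1 l ltac:(pose proof (Rmax_l R1 R2); lra)).
  specialize (H2 l ltac:(pose proof (Rmax_r R1 R2); lra)).
  unfold Cminus; eapply Rle_trans; [apply Cmod_triangle|].
  rewrite Cmod_opp, Cmod_mult.
  assert (Cmod t * Cmod (G l) <= eps / 2)%R.
  { apply Rle_trans with ((Cmod t + 1) * (eps / (2 * (Cmod t + 1))))%R.
    - pose proof (Cmod_ge_0 (G l)); apply Rmult_le_compat; lra.
    - right; field; lra. }
  lra.
Qed.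

Lemma vanishes_far_small_on_period_lines (sg : R) (F : C -> C) :
  (sg * sg = 1)%R -> vanishes_far sg F -> small_on_period_lines F.
Proof.
  intros Hsg HF d Hd.
  destruct (HF d Hd) as [R1 H1].
  exists (sg * R1)%R; intros u; apply H1.
  unfold two_pi_i, Ci, Re; simpl.
  replace (sg * (sg * R1 + (u * (2 * PI * 0 - 0 * 1) - 0 * (2 * PI * 1 + 0 * 0))))%R
    with (sg * sg * R1)%R by ring.
  rewrite Hsg; lra.
Qed.

Lemma ep_prim_at_base_point (sg : R) (s sV : expoly) (f L : C -> C) (t lng x0 : C) :
  (sg * sg = 1)%R ->
  (forall z, f (cexp z) * cexp z = ep_eval s z) ->
  vanishes_far sg (fun l => L l - RtoC sg * l - lng) ->
  vanishes_far sg (fun l => - ep_eval sV l + t * L l + lint f x0 l) ->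
  ep_prim s x0 = t * lng - ep_coef0 sV.
Proof.
  intros Hsg Hf HL HE.
  set (sG := ep_prim_periodic s ++ ep_scale (-1) sV).
  destruct (ep_affine_small_on_period_lines sG (ep_coef0 s + t * sg) (t * lng - ep_prim s x0))
    as [_ H0].
  - intros d Hd.
    destruct (vanishes_far_small_on_period_lines sg _ Hsg
                (vanishes_far_minus_scal sg _ _ t HE HL) d Hd) as [x Hx].
    exists x; intros u.
    eapply Rle_trans; [right|apply (Hx u)]; f_equal.
    unfold sG; rewrite ep_eval_app, ep_eval_scale, (lint_expoly f s x0 _ Hf), !ep_prim_split.
    ring.
  - unfold sG in H0; rewrite ep_coef0_app, ep_coef0_scale, ep_coef0_prim_periodic in H0.
    transitivity (t * lng - ep_coef0 sV - (0 + -1 * ep_coef0 sV + (t * lng - ep_prim s x0)));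
      [ring|rewrite H0; ring].
Qed.

Lemma ep_prim_at_base_point_infinity (s sV : expoly) (f L V : C -> C) (t lng x0 : C) :
  (forall z, f (cexp z) * cexp z = ep_eval s z) ->
  (forall l, V l = ep_eval sV l) ->
  (forall eps, (0 < eps)%R -> exists R0 : R, forall l, (R0 <= Re l)%R ->
     (Cmod (L l - l - lng) < eps)%R) ->
  (exists K0 R0 : R, forall l, (R0 <= Re l)%R ->
     (Cmod (- V l + t * L l + lint f x0 l) <= K0 * exp (- Re l))%R) ->
  ep_prim s x0 = t * lng - ep_coef0 sV.
Proof.
  intros Hf HV HL [K0 [R0 HE]].
  apply (ep_prim_at_base_point 1 s sV f L t lng x0); [ring|exact Hf| |].
  - intros eps Heps; destruct (HL eps Heps) as [R1 H1]; exists R1; intros l Hl.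
    replace (L l - RtoC 1 * l - lng) with (L l - l - lng) by ring.
    apply Rlt_le, H1; lra.
  - apply (vanishes_far_exp_bound 1 K0 R0); intros l Hl.
    rewrite <- HV, Rmult_1_l; apply HE; lra.
Qed.

Lemma ep_prim_at_base_point_zero (s sV : expoly) (f L V : C -> C) (t lng x0 : C) :
  (forall z, f (cexp z) * cexp z = ep_eval s z) ->
  (forall l, V l = ep_eval sV l) ->
  (forall eps, (0 < eps)%R -> exists R0 : R, forall l, (Re l <= - R0)%R ->
     (Cmod (L l + l - lng) < eps)%R) ->
  (exists K0 R0 : R, forall l, (Re l <= - R0)%R ->
     (Cmod (- V l + t * L l + lint f x0 l) <= K0 * exp (Re l))%R) ->
  ep_prim s x0 = t * lng - ep_coef0 sV.
Proof.
  intros Hf HV HL [K0 [R0 HE]].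
  apply (ep_prim_at_base_point (-1) s sV f L t lng x0); [ring|exact Hf| |].
  - intros eps Heps; destruct (HL eps Heps) as [R1 H1]; exists R1; intros l Hl.
    replace (L l - RtoC (-1) * l - lng) with (L l + l - lng) by ring.
    apply Rlt_le, H1; lra.
  - apply (vanishes_far_exp_bound (-1) K0 R0); intros l Hl.
    rewrite <- HV; replace (- (-1 * Re l))%R with (Re l) by ring; apply HE; lra.
Qed.

Definition ep_Q (d2 : nat) (g : C) (al : nat -> C) : expoly :=
  (g, 1%Z) :: map (fun j => (al j, (- Z.of_nat j)%Z)) (seq 0 (S d2)).
Definition ep_P (d1 : nat) (g : C) (be : nat -> C) : expoly :=
  (g, (-1)%Z) :: map (fun j => (be j, Z.of_nat j)) (seq 0 (S d1)).
Definition ep_V (d : nat) (u : nat -> C) (s : expoly) : expoly :=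
  flat_map (fun k => ep_scale (u (S k) / INR (S k)) (ep_pow s (S k))) (seq 0 (S d)).

Lemma Qf_cexp (d2 : nat) (g : C) (al : nat -> C) (l : C) :
  Qf d2 g al (cexp l) = ep_eval (ep_Q d2 g al) l.
Proof.
  unfold Qf, ep_Q; rewrite ep_eval_cons; unfold ep_eval.
  rewrite sum_list_map, sum_list_seq; unfold mono_eval; simpl.
  rewrite cexpZ_1; f_equal.
  apply sum_n_C_ext; intros j; rewrite cexpZ_opp_nat; reflexivity.
Qed.

Lemma dQf_cexp (d2 : nat) (g : C) (al : nat -> C) (l : C) :
  dQf d2 g al (cexp l) * cexp l = ep_eval (ep_deriv (ep_Q d2 g al)) l.
Proof.
  assert (Hl := cexp_neq0 l).
  unfold dQf, ep_Q, ep_deriv; rewrite map_cons, ep_eval_cons, map_map; unfold ep_eval.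
  rewrite sum_list_map, sum_list_seq; unfold mono_eval, mono_deriv; simpl.
  unfold Cminus; rewrite Cmult_plus_distr_r, cexpZ_1; f_equal; [ring|].
  match goal with |- - ?S * _ = _ => replace (- S * cexp l) with (S * - cexp l) by ring end.
  rewrite sum_n_Cmult_r; apply sum_n_C_ext; intros j.
  rewrite cexpZ_opp_nat, opp_IZR, <- INR_IZR_INZ, RtoC_opp; simpl Cpow.
  field; exact Hl.
Qed.

Lemma Pf_cexp (d1 : nat) (g : C) (be : nat -> C) (l : C) :
  Pf d1 g be (cexp l) = ep_eval (ep_P d1 g be) l.
Proof.
  unfold Pf, ep_P; rewrite ep_eval_cons; unfold ep_eval.
  rewrite sum_list_map, sum_list_seq; unfold mono_eval; simpl.
  replace (-1)%Z with (- Z.of_nat 1)%Z by reflexivity.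
  rewrite cexpZ_opp_nat; f_equal; [simpl; unfold Cdiv; ring|].
  apply sum_n_C_ext; intros j; rewrite cexpZ_nat; reflexivity.
Qed.

Lemma dPf_cexp (d1 : nat) (g : C) (be : nat -> C) (l : C) :
  dPf d1 g be (cexp l) * cexp l = ep_eval (ep_deriv (ep_P d1 g be)) l.
Proof.
  assert (Hl := cexp_neq0 l).
  unfold dPf, ep_P, ep_deriv; rewrite map_cons, ep_eval_cons, map_map; unfold ep_eval.
  rewrite sum_list_map, sum_list_seq; unfold mono_eval, mono_deriv; simpl.
  replace (-1)%Z with (- Z.of_nat 1)%Z by reflexivity.
  rewrite Cmult_plus_distr_r, cexpZ_opp_nat; f_equal.
  - simpl; field; exact Hl.
  - rewrite sum_n_Cmult_r; apply sum_n_C_ext; intros j.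
    rewrite cexpZ_nat, <- INR_IZR_INZ; field; exact Hl.
Qed.

Lemma Vpot_cexp (d : nat) (u : nat -> C) (F : C -> C) (s : expoly) :
  (forall l, F (cexp l) = ep_eval s l) ->
  forall l, Vpot d u (F (cexp l)) = ep_eval (ep_V d u s) l.
Proof.
  intros HF l; rewrite HF; unfold Vpot, ep_V; rewrite ep_eval_flat_map, sum_list_seq.
  apply sum_n_C_ext; intros k; rewrite ep_eval_scale, ep_eval_pow; reflexivity.
Qed.

Lemma mul_deriv_cexp (F dG : C -> C) (sF sG : expoly) :
  (forall l, F (cexp l) = ep_eval sF l) ->
  (forall l, dG (cexp l) * cexp l = ep_eval (ep_deriv sG) l) ->
  forall z, F (cexp z) * dG (cexp z) * cexp z = ep_eval (ep_mul sF (ep_deriv sG)) z.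
Proof. intros HF HG z; rewrite ep_eval_mul, <- HF, <- HG; ring. Qed.

Lemma is_coef0_ep_coef0 (f : C -> C) (c0 : C) (s : expoly) :
  is_coef0 f c0 -> (forall l, f (cexp l) = ep_eval s l) -> ep_coef0 s = c0.
Proof.
  intros [N [a [Hf Ha]]] Hs.
  set (sL := map (fun k => (a k, (Z.of_nat k - Z.of_nat N)%Z)) (seq 0 (S (2 * N)))).
  transitivity (ep_coef0 sL).
  - apply ep_coef0_ext; intros l.
    assert (Hl := cexp_neq0 l).
    rewrite <- Hs, Hf by exact Hl.
    unfold sL, ep_eval; rewrite sum_list_map, sum_list_seq.
    unfold Cdiv; rewrite sum_n_Cmult_r; apply sum_n_C_ext; intros k; unfold mono_eval; simpl.
    replace (Z.of_nat k - Z.of_nat N)%Z with (Z.of_nat k + - Z.of_nat N)%Z by lia.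
    rewrite cexpZ_add, cexpZ_nat, cexpZ_opp_nat, Cpow_inv by exact Hl.
    ring.
  - unfold sL, ep_coef0; rewrite sum_list_map.
    replace (seq 0 (S (2 * N))) with (seq 0 N ++ N :: seq (S N) N)
      by (replace (S (2 * N)) with (N + S N)%nat by lia; rewrite seq_app; reflexivity).
    rewrite sum_list_app, sum_list_cons, !sum_list_zero.
    + unfold mono_coef0; simpl; rewrite Z.sub_diag, Ha; simpl; ring.
    all: intros k Hk; apply in_seq in Hk; unfold mono_coef0; simpl.
    all: destruct (Z.eqb_spec (Z.of_nat k - Z.of_nat N) 0); [lia|reflexivity].
Qed.

Lemma is_coef0_mul_sub_Vpot (F G : C -> C) (sF sG : expoly) (d1 d2 : nat) (u v : nat -> C)
    (c0 : C) :
  (forall l, F (cexp l) = ep_eval sF l) -> (forall l, G (cexp l) = ep_eval sG l) ->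
  is_coef0 (fun l => F l * G l - Vpot d1 u (G l) - Vpot d2 v (F l)) c0 ->
  c0 = ep_coef0 (ep_mul sF sG) - ep_coef0 (ep_V d1 u sG) - ep_coef0 (ep_V d2 v sF).
Proof.
  intros HF HG Hc0.
  rewrite <- (is_coef0_ep_coef0 _ _
    (ep_mul sF sG ++ ep_scale (-1) (ep_V d1 u sG) ++ ep_scale (-1) (ep_V d2 v sF)) Hc0).
  - rewrite !ep_coef0_app, !ep_coef0_scale; ring.
  - intros l; rewrite !ep_eval_app, !ep_eval_scale, ep_eval_mul,
      <- (Vpot_cexp d1 u G sG HG), <- (Vpot_cexp d2 v F sF HF), <- HF, <- HG; ring.
Qed.

Theorem lemma2p1
  (d1 d2 : nat) (g : C) (al be : nat -> C)
  (t : C) (u v : nat -> C) (lng : C) (LQ LP : C -> C) (xq xp : C) (c0 : C) :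
  (1 <= d1)%nat -> (1 <= d2)%nat -> g <> 0 ->
  (* t = res_{∞_Q} P dQ *)
  is_res_inf (fun l => Pf d1 g be l * dQf d2 g al l) t ->
  (* u_K = - res_{∞_Q} P Q^{-K} dQ,  1 <= K <= d1+1 *)
  (forall K : nat, (1 <= K <= S d1)%nat ->
     is_res_inf (fun l => Pf d1 g be l * (/ Qf d2 g al l) ^ K * dQf d2 g al l) (- u K)) ->
  (* v_J = - res_{∞_P} Q P^{-J} dP,  1 <= J <= d2+1 *)
  (forall J : nat, (1 <= J <= S d2)%nat ->
     is_res_0 (fun l => Qf d2 g al l * (/ Pf d1 g be l) ^ J * dPf d1 g be l) (- v J)) ->
  (* fixed branch ln γ of the logarithm of γ *)
  cexp lng = g ->
  (* branch of ln Q(λ) near λ = ∞, compatible: ln Q(λ) = ln γ + ln λ + o(1) *)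
  (exists R0 : R, forall l : C, (R0 <= Re l)%R -> cexp (LQ l) = Qf d2 g al (cexp l)) ->
  (forall eps : R, (0 < eps)%R -> exists R0 : R, forall l : C, (R0 <= Re l)%R ->
     (Cmod (LQ l - l - lng)%C < eps)%R) ->
  (* branch of ln P(λ) near λ = 0, compatible: ln P(λ) = ln γ - ln λ + o(1) *)
  (exists R0 : R, forall l : C, (Re l <= - R0)%R -> cexp (LP l) = Pf d1 g be (cexp l)) ->
  (forall eps : R, (0 < eps)%R -> exists R0 : R, forall l : C, (Re l <= - R0)%R ->
     (Cmod (LP l + l - lng)%C < eps)%R) ->
  (* defining property of X_q = cexp xq :
     -V1(Q) + t ln Q + ∫_{X_q}^λ P dQ = O(λ^{-1}) as λ -> ∞ *)
  (exists (K0 R0 : R), forall l : C, (R0 <= Re l)%R ->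
     (Cmod (- Vpot d1 u (Qf d2 g al (cexp l)) + t * LQ l
            + lint (fun z => Pf d1 g be z * dQf d2 g al z) xq l)%C
      <= K0 * exp (- Re l))%R) ->
  (* defining property of X_p = cexp xp :
     -V2(P) + t ln P + ∫_{X_p}^λ Q dP = O(λ) as λ -> 0 *)
  (exists (K0 R0 : R), forall l : C, (Re l <= - R0)%R ->
     (Cmod (- Vpot d2 v (Pf d1 g be (cexp l)) + t * LP l
            + lint (fun z => Qf d2 g al z * dPf d1 g be z) xp l)%C
      <= K0 * exp (Re l))%R) ->
  (* c0 = (PQ - V1(Q) - V2(P))_0 *)
  is_coef0 (fun l => Pf d1 g be l * Qf d2 g al l
                     - Vpot d1 u (Qf d2 g al l) - Vpot d2 v (Pf d1 g be l)) c0 ->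
  Qf d2 g al (cexp xp) * Pf d1 g be (cexp xp)
    + lint (fun z => Pf d1 g be z * dQf d2 g al z) xp xq = c0 + 2 * t * lng
  /\
  Qf d2 g al (cexp xq) * Pf d1 g be (cexp xq)
    + lint (fun z => Qf d2 g al z * dPf d1 g be z) xq xp = c0 + 2 * t * lng.
Proof.
  intros _ _ _ _ _ _ _ _ HLQ _ HLP HXq HXp Hc0.
  assert (HPdQ := mul_deriv_cexp _ _ _ _ (Pf_cexp d1 g be) (dQf_cexp d2 g al)).
  assert (HQdP := mul_deriv_cexp _ _ _ _ (Qf_cexp d2 g al) (dPf_cexp d1 g be)).
  assert (HV1 := Vpot_cexp d1 u _ _ (Qf_cexp d2 g al)).
  assert (HV2 := Vpot_cexp d2 v _ _ (Pf_cexp d1 g be)).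
  rewrite (lint_expoly (fun z => Pf d1 g be z * dQf d2 g al z) _ _ _ HPdQ),
    (lint_expoly (fun z => Qf d2 g al z * dPf d1 g be z) _ _ _ HQdP), !Qf_cexp, !Pf_cexp.
  rewrite !(Cmult_comm (ep_eval (ep_Q d2 g al) _)), !ep_prim_mul_deriv,
    (ep_prim_at_base_point_infinity _ _ _ LQ _ t lng xq HPdQ HV1 HLQ HXq),
    (ep_prim_at_base_point_zero _ _ _ LP _ t lng xp HQdP HV2 HLP HXp),
    (is_coef0_mul_sub_Vpot _ _ _ _ d1 d2 u v c0 (Pf_cexp d1 g be) (Qf_cexp d2 g al) Hc0).
  split; ring.
Qed.
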